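(* Let $G=(V,E)$ be the bipartite graph with $V=\{v_1,\dots,v_{10}\}$ and the 14 edges $\{v_1,v_6\},\{v_1,v_7\},\{v_2,v_6\},\{v_2,v_7\},\{v_2,v_8\},\{v_3,v_7\},\{v_3,v_9\},\{v_3,v_{10}\},\{v_4,v_8\},\{v_4,v_9\},\{v_4,v_{10}\},\{v_5,v_8\},\{v_5,v_9\},\{v_5,v_{10}\}$, and let $R=\{\{v_2,v_7\},\{v_4,v_9\},\{v_5,v_{10}\}\}$. Let $y\in\mathbb{R}^E$ be given by $y_{\{v_1,v_6\}}=\frac23$ and $y_e=\frac13$ for all other $e\in E$. Then $y\in Q_{(G,R)}$.
   Context: For a bipartite graph $G=(V,E)$ with $|V|=2n$ (here $n=5$) and red edges $R$, let $\mathcal{L}_{\mathrm{all}}(G)$ be the set of labelings $L\colon V\to\{0,1\}$ with $|L^{-1}(1)|\equiv n\pmod 2$, and $E_L=\{\{u,v\}\in E\setminus R\colon L(u)=L(v)\}\cup\{\{u,v\}\in R\colon L(u)\ne L(v)\}$. Then $Q_{(G,R)}=\{x\in\mathbb{R}^E_{\ge0}\colon x(\delta(u))=1\ \forall u\in V,\ x(E_L)\ge1\ \forall L\in\mathcal{L}_{\mathrm{all}}(G)\}$, where $\delta(u)$ is the set of edges at $u$ and $x(S)=\sum_{e\in S}x_e$. *)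

From HB Require Import structures.
From mathcomp Require Import all_boot all_order all_algebra.
Set Implicit Arguments. Unset Strict Implicit. Unset Printing Implicit Defensive.
Import Order.TTheory GRing.Theory Num.Theory.
Local Open Scope ring_scope.

(* A (bipartite) graph is given by a finite vertex type V, a finite edge type E,
   and the endpoints  ends e = (u, v)  of each edge e = {u, v}.
   red : pred E is the set R of red edges. *)

Definition incident (V E : finType) (ends : E -> V * V) (u : V) (e : E) : bool :=
  ((ends e).1 == u) || ((ends e).2 == u).

Definition in_EL (V E : finType) (ends : E -> V * V) (red : pred E)
  (L : {ffun V -> bool}) (e : E) : bool :=
  if red e then L (ends e).1 != L (ends e).2 else L (ends e).1 == L (ends e).2.

Definition L_all (V : finType) (n : nat) (L : {ffun V -> bool}) : bool :=
  odd #|[set v | L v]| == odd n.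

Definition in_Q (R : realFieldType) (V E : finType) (ends : E -> V * V)
  (red : pred E) (n : nat) (x : E -> R) : Prop :=
  [/\ (forall e, 0 <= x e),
      (forall u : V, \sum_(e | incident ends u e) x e = 1) &
      (forall L : {ffun V -> bool}, L_all n L ->
         1 <= \sum_(e | in_EL ends red L e) x e)].

(* The concrete graph of Lemma 19: vertex v_i is the ordinal i-1 of 'I_10. *)
Definition G19_edges : seq (nat * nat) :=
  [:: (1,6); (1,7); (2,6); (2,7); (2,8); (3,7); (3,9); (3,10);
      (4,8); (4,9); (4,10); (5,8); (5,9); (5,10)].

Definition G19_ends (e : 'I_14) : 'I_10 * 'I_10 :=
  let p := nth (0,0)%N G19_edges e in (inord (p.1.-1), inord (p.2.-1)).

Definition G19_red : pred 'I_14 :=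
  fun e => nth (0,0)%N G19_edges e \in [:: (2,7); (4,9); (5,10)]%N.

Definition y19 (R : realFieldType) (e : 'I_14) : R :=
  if nth (0,0)%N G19_edges e == (1,6)%N then 2 / 3 else 1 / 3.

From mathcomp Require Import all_boot all_order all_algebra.
Set Implicit Arguments.
Unset Strict Implicit.
Unset Printing Implicit Defensive.
Import Order.TTheory GRing.Theory Num.Theory.
Local Open Scope ring_scope.

(* Multiplying y by 3 gives integer weights w, equal to 2 on {v1,v6} and to 1
   elsewhere, for which every vertex has weighted degree 3.  Hence y satisfies
   the degree equations, and each parity constraint x(E_L) >= 1 becomes
   w(E_L) >= 3, which is verified for all 2^10 labelings by exhaustion. *)

Section ScaledIntegerPoint.

Variables (R : realFieldType) (V E : finType) (ends : E -> V * V).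
Variables (red : pred E) (n : nat) (w : E -> nat) (k : nat) (x : E -> R).
Hypothesis k_gt0 : (0 < k)%N.
Hypothesis x_scaled : forall e, x e = (w e)%:R / k%:R.

Lemma sum_scaled (P : pred E) :
  \sum_(e | P e) x e = (\sum_(e | P e) w e)%N%:R / k%:R.
Proof. by rewrite natr_sum mulr_suml; apply: eq_bigr => e _; rewrite x_scaled. Qed.

Lemma in_Q_scaled :
  (forall u, \sum_(e | incident ends u e) w e = k)%N ->
  (forall L, L_all n L -> k <= \sum_(e | in_EL ends red L e) w e)%N ->
  in_Q ends red n x.
Proof.
have k_unit : k%:R != 0 :> R by rewrite pnatr_eq0 -lt0n.
move=> w_degree w_EL; split=> [e | u | L /w_EL w_EL_L].
- by rewrite x_scaled divr_ge0 ?ler0n.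
- by rewrite sum_scaled w_degree divff.
- by rewrite sum_scaled ler_pdivlMr ?ltr0n // mul1r ler_nat.
Qed.

End ScaledIntegerPoint.

Lemma card_set_ord_sum (m : nat) (P : pred 'I_m.+1) :
  #|[set v | P v]| = (\sum_(0 <= i < m.+1) P (inord i))%N.
Proof.
rewrite cardsE -sum1_card big_mknat big_mkcond /=.
by apply: eq_bigr => i _; rewrite unfold_in; case: (P _).
Qed.

Lemma G19_ends_val (e : 'I_14) :
  val (G19_ends e).1 = (nth (0,0) G19_edges e).1.-1 /\
  val (G19_ends e).2 = (nth (0,0) G19_edges e).2.-1.
Proof.
have bounded : all (fun p => (p.1.-1 < 10) && (p.2.-1 < 10))%N G19_edges.
  by [].
have /andP[lt1 lt2] := all_nthP (0,0)%N bounded e (ltn_ord e).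
by rewrite /= !inordK.
Qed.

(* Edge e is indexed by its position in G19_edges and vertex v_j by j - 1, so
   that the sums over 0 <= i < 14 below reduce by computation. *)
Definition w19 (i : nat) : nat :=
  (if nth (0,0) G19_edges i == (1,6) then 2 else 1)%N.

Definition incident19 (m i : nat) : bool :=
  let p := nth (0,0) G19_edges i in (p.1.-1 == m) || (p.2.-1 == m).

Definition in_EL19 (f : nat -> bool) (i : nat) : bool :=
  let p := nth (0,0) G19_edges i in
  if p \in [:: (2,7); (4,9); (5,10)] then f p.1.-1 != f p.2.-1
  else f p.1.-1 == f p.2.-1.

Lemma y19E (R : realFieldType) (e : 'I_14) : y19 R e = (w19 e)%:R / 3%:R.
Proof. by rewrite /y19 /w19; case: ifP. Qed.

Lemma incident_G19 (u : 'I_10) (e : 'I_14) :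
  incident G19_ends u e = incident19 u e.
Proof. by have [e1 e2] := G19_ends_val e; rewrite /incident -!val_eqE e1 e2. Qed.

Lemma in_EL_G19 (L : {ffun 'I_10 -> bool}) (e : 'I_14) :
  in_EL G19_ends G19_red L e = in_EL19 (fun i => L (inord i)) e.
Proof. by []. Qed.

Lemma degree19 (m : nat) :
  (m < 10 -> \sum_(0 <= i < 14 | incident19 m i) w19 i = 3)%N.
Proof. by do 10! (case: m => [|m]; first by rewrite unlock). Qed.

Lemma in_EL19_weight (f : nat -> bool) :
  odd (\sum_(0 <= i < 10) f i) = odd 5 ->
  (3 <= \sum_(0 <= i < 14 | in_EL19 f i) w19 i)%N.
Proof.
(* Without big_mkcond, unfolding the filtered sum copies its tail into both
   branches of every test, and the term grows exponentially. *)
rewrite (big_mkcond (in_EL19 f)) unlock /in_EL19 /w19 /=.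
by case: (f 0); case: (f 1); case: (f 2); case: (f 3); case: (f 4);
   case: (f 5); case: (f 6); case: (f 7); case: (f 8); case: (f 9).
Qed.

Theorem lemma19 (R : realFieldType) :
  in_Q G19_ends G19_red 5 (@y19 R).
Proof.
apply: (in_Q_scaled (w := fun e : 'I_14 => w19 e) (k := 3)) => // [e | u | L].
- exact: y19E.
- under eq_bigl => e do rewrite incident_G19.
  by rewrite -(big_mkord (incident19 u) w19) degree19.
- rewrite /L_all card_set_ord_sum => /eqP parity.
  under eq_bigl => e do rewrite in_EL_G19.
  by rewrite -big_mkord in_EL19_weight.
Qed.
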